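(* Let $n\ge 2$ and $k\ge 1$ be integers, and let $\mathcal{A}_n$ denote the set of Dyck $n$-paths whose terminal descent has even length and all of whose other descents to ground level (if any) have odd length. Then there is a bijection between the paths in $\mathcal{A}_n$ having exactly $k$ returns and the Dyck $(n-1)$-paths that contain exactly $k-1$ early hills.
   Context: A Dyck $n$-path is a lattice path consisting of $n$ upsteps $U=(1,1)$ and $n$ downsteps $D=(1,-1)$ that starts and ends at height $0$ (ground level) and never goes below ground level. A descent is a maximal run of consecutive downsteps; its length is the number of downsteps in it. The terminal descent is the descent that ends at the final point of the path. A return is a downstep ending at ground level, and a descent to ground level is a descent whose last step is a return. An early hill is an occurrence of three consecutive steps $UDU$ in which the first $U$ starts at ground level. *)

(* A lattice path is a sequence of steps: true = U = (1,1), false = D = (1,-1). *)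
From mathcomp Require Import all_boot.
Set Implicit Arguments. Unset Strict Implicit. Unset Printing Implicit Defensive.

Definition path_t := seq bool.

Definition ups (s : path_t) : nat := count id s.
Definition downs (s : path_t) : nat := count negb s.

Definition dyck (n : nat) (p : path_t) : Prop :=
  [/\ ups p = n, downs p = n &
      forall i, downs (take i p) <= ups (take i p)].

Definition trailing_downs (s : path_t) : nat := find id (rev s).

Definition terminal_descent_length (p : path_t) : nat := trailing_downs p.

(* step i (0-based) is a return: a downstep ending at ground level *)
Definition is_return (p : path_t) (i : nat) : bool :=
  [&& i < size p, ~~ nth true p i &
      ups (take i.+1 p) == downs (take i.+1 p)].

Definition nreturns (p : path_t) : nat := count (is_return p) (iota 0 (size p)).

(* The descents to ground level are the descents whose last step is a return;
   the descent whose last step is step i has length trailing_downs (take i.+1 p).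
   The non-terminal ones are those whose last step i is not the final step. *)
Definition in_A (n : nat) (p : path_t) : Prop :=
  [/\ dyck n p,
      ~~ odd (terminal_descent_length p) &
      forall i, is_return p i -> i.+1 < size p ->
        odd (trailing_downs (take i.+1 p))].

Definition is_early_hill (p : path_t) (i : nat) : bool :=
  [&& i.+2 < size p, nth false p i, ~~ nth true p i.+1, nth false p i.+2 &
      ups (take i p) == downs (take i p)].

Definition nearly_hills (p : path_t) : nat := count (is_early_hill p) (iota 0 (size p)).

From mathcomp Require Import all_boot zify.
From Stdlib Require Import ProofIrrelevance IndefiniteDescription.

Set Implicit Arguments. Unset Strict Implicit. Unset Printing Implicit Defensive.

(* Read a Dyck path through its first-return decomposition U l D r, i.e. as a
   binary tree.  A path with even terminal descent ends in a prime component
   U (S U P D) D, where P again has even terminal descent; writing R for the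
   rest of the path, phi (R U S U P D D) = U U R D S D phi(P) is a
   semilength-preserving bijection onto the paths without hills.  A path of A_n
   with k returns is C_1 ... C_(k-1) U (R U Q D) D with C_i = U Q_i D, and the
   odd descents of the C_i make every Q_i have even terminal descent; it is sent to
     phi(Q_1) U D ... phi(Q_(k-1)) U D phi(Q) U R D,
   of semilength n - 1.  Since the phi-images have no hills, the early hills of
   this path are exactly the k - 1 inserted U D, and they locate the
   decomposition, which makes the map invertible. *)

Lemma rel_sig_bijective (T U : Type) (P : T -> Prop) (Q : U -> Prop) (R : T -> U -> Prop) :
  (forall x, P x -> exists2 y, Q y & R x y) ->
  (forall y, Q y -> exists2 x, P x & R x y) ->
  (forall x y y', R x y -> R x y' -> y = y') ->
  (forall x x' y, R x y -> R x' y -> x = x') ->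
  exists f : {x | P x} -> {y | Q y}, bijective f.
Proof.
move=> totl totr Rfun Rinj.
have [f Rf] : exists f : {x | P x} -> {y | Q y}, forall x, R (sval x) (sval (f x)).
  apply: (functional_choice (fun x y => R (sval x) (sval y))) => -[x Px].
  have [y Qy Rxy] := totl x Px.
  by exists (exist _ y Qy).
have [g Rg] : exists g : {y | Q y} -> {x | P x}, forall y, R (sval (g y)) (sval y).
  apply: (functional_choice (fun y x => R (sval x) (sval y))) => -[y Qy].
  have [x Px Rxy] := totr y Qy.
  by exists (exist _ x Px).
exists f, g => [x|y]; apply: eq_sig_hprop => [? ? ?|]; try exact: proof_irrelevance.
- exact: Rinj (Rg (f x)) (Rf x).
- exact: Rfun (Rf (g y)) (Rg y).
Qed.

Inductive tree := Leaf | Node of tree & tree.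

(* The right spine of t lists the prime components U l D of encode t, so
   treturns, thills and tdescent below count returns and early hills and give
   the length of the terminal descent. *)
Fixpoint encode (t : tree) : path_t :=
  if t is Node l r then true :: encode l ++ false :: encode r else [::].

Fixpoint tsize (t : tree) : nat :=
  if t is Node l r then (tsize l + tsize r).+1 else 0.

Fixpoint tcat (t u : tree) : tree :=
  if t is Node l r then Node l (tcat r u) else u.

Definition is_leaf (t : tree) : bool := if t is Leaf then true else false.

Fixpoint treturns (t : tree) : nat :=
  if t is Node _ r then (treturns r).+1 else 0.

Fixpoint thills (t : tree) : nat :=
  if t is Node l r then (is_leaf l && ~~ is_leaf r) + thills r else 0.

Fixpoint tdescent (t : tree) : nat :=
  if t is Node l r then (if is_leaf r then (tdescent l).+1 else tdescent r) else 0.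

(* The descent to ground level closing a component U l D has length
   tdescent l + 1. *)
Fixpoint odd_ground_descents (t : tree) : Prop :=
  if t is Node l r then (~~ is_leaf r -> ~~ odd (tdescent l)) /\ odd_ground_descents r
  else True.

Fixpoint hill_free (t : tree) : Prop :=
  if t is Node l r then ~~ is_leaf l /\ hill_free r else True.

Lemma tsize_tcat a b : tsize (tcat a b) = tsize a + tsize b.
Proof. by elim: a => //= l _ r ->; rewrite addSn addnA. Qed.

Lemma tcat_Leaf a : tcat a Leaf = a.
Proof. by elim: a => //= l _ r ->. Qed.

Lemma is_leaf_tcat_Node a x y : is_leaf (tcat a (Node x y)) = false.
Proof. by case: a. Qed.

Lemma tcat_Node_neq_Leaf a x y : tcat a (Node x y) <> Leaf.
Proof. by case: a. Qed.

Lemma tdescent_tcat a b : tdescent (tcat a b) = if is_leaf b then tdescent a else tdescent b.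
Proof.
case: b => [|x y]; first by rewrite tcat_Leaf.
elim: a => //= l _ r ->; by rewrite is_leaf_tcat_Node.
Qed.

Lemma hill_free_thills F w : hill_free F -> thills (tcat F w) = thills w.
Proof. by elim: F => //= l _ r IH [/negbTE -> /IH ->]. Qed.

Lemma tcat_last_inj a b x y : tcat a (Node x Leaf) = tcat b (Node y Leaf) -> a = b /\ x = y.
Proof.
elim: a b => [|l _ r IH] [|l' r'] //=.
- by case=> ->.
- by case=> _ /esym /tcat_Node_neq_Leaf.
- by case=> _ /tcat_Node_neq_Leaf.
- by case=> -> /IH [-> ->].
Qed.

Lemma tree_lastP t : t = Leaf \/ exists a x, t = tcat a (Node x Leaf).
Proof.
elim: t => [|l _ r [->|[a [x ->]]]]; first by left.
- by right; exists Leaf, l.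
- by right; exists (Node l a), x.
Qed.

Inductive phi : tree -> tree -> Prop :=
| phi_leaf : phi Leaf Leaf
| phi_node R S P G :
    phi P G -> phi (tcat R (Node (tcat S (Node P Leaf)) Leaf)) (Node (Node R S) G).

Lemma phi_tsize t u : phi t u -> tsize t = tsize u.
Proof. elim=> //= R S P G _ IH; rewrite !tsize_tcat /= tsize_tcat /=; lia. Qed.

Lemma phi_even t u : phi t u -> ~~ odd (tdescent t).
Proof. by elim=> //= R S P G _; rewrite tdescent_tcat /= tdescent_tcat /= negbK. Qed.

Lemma phi_hill_free t u : phi t u -> hill_free u.
Proof. by elim. Qed.

Lemma phi_total_l t : ~~ odd (tdescent t) -> exists u, phi t u.
Proof.
have [m] := ubnP (tsize t); elim: m t => // m IH t.
case: (tree_lastP t) => [->|[R [x ->]]]; first by exists Leaf; constructor.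
rewrite tsize_tcat tdescent_tcat /= => hs.
case: (tree_lastP x) hs => [->//|[S [P ->]]].
rewrite tdescent_tcat /= negbK tsize_tcat /= => hs hP.
have lt_P_m : tsize P < m by lia.
have [G HG] := IH P lt_P_m hP.
by exists (Node (Node R S) G); constructor.
Qed.

Lemma phi_total_r u : hill_free u -> exists t, phi t u.
Proof.
elim: u => [|[|R S] _ r IH] /=; first by exists Leaf; constructor.
- by case.
- case=> _ /IH [t Ht].
  by exists (tcat R (Node (tcat S (Node t Leaf)) Leaf)); constructor.
Qed.

Lemma phi_inv t u : phi t u ->
  t = Leaf /\ u = Leaf \/
  exists R S P G, [/\ t = tcat R (Node (tcat S (Node P Leaf)) Leaf), u = Node (Node R S) G
                    & phi P G].
Proof. by case=> [|R S P G HP]; [left | right; exists R, S, P, G]. Qed.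

Lemma phi_functional t u u' : phi t u -> phi t u' -> u = u'.
Proof.
move=> H; elim: H u' => [|R S P G _ IH] u'
  /phi_inv [[et ->] // | [R' [S' [P' [G' [et -> HP']]]]]].
- by case: (tcat_Node_neq_Leaf (esym et)).
- by case: (tcat_Node_neq_Leaf et).
- case/tcat_last_inj: et => <- /tcat_last_inj [<- eP]; subst P'.
  by rewrite (IH G' HP').
Qed.

Lemma phi_injective t t' u : phi t u -> phi t' u -> t = t'.
Proof.
move=> H; elim: H t' => [|R S P G _ IH] t'
  /phi_inv [[-> eu] // | [R' [S' [P' [G' [-> eu HP']]]]]] //.
by case: eu => <- <- eG; subst G'; rewrite (IH P' HP').
Qed.

Inductive psi : nat -> tree -> tree -> Prop :=
| psi_last R Q F :
    phi Q F -> psi 1 (Node (tcat R (Node Q Leaf)) Leaf) (tcat F (Node R Leaf))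
| psi_cons k Q G t u :
    phi Q G -> psi k t u -> psi k.+1 (Node Q t) (tcat G (Node Leaf u)).

Lemma psi_nonleaf_l k t u : psi k t u -> ~~ is_leaf t.
Proof. by case. Qed.

Lemma psi_nonleaf_r k t u : psi k t u -> ~~ is_leaf u.
Proof. by case=> *; rewrite is_leaf_tcat_Node. Qed.

Lemma psi_gt0 k t u : psi k t u -> 0 < k.
Proof. by case. Qed.

Lemma psi_tsize k t u : psi k t u -> (tsize u).+1 = tsize t.
Proof.
elim=> {k t u} [R Q F|k Q G t u] /phi_tsize eQ; rewrite /= !tsize_tcat /= ?tsize_tcat; lia.
Qed.

Lemma psi_treturns k t u : psi k t u -> treturns t = k.
Proof. by elim=> {k t u} //= k Q G t u _ _ ->. Qed.

Lemma psi_thills k t u : psi k t u -> thills u = k.-1.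
Proof.
elim=> {k t u} [R Q F|k Q G t u] /phi_hill_free hF; rewrite hill_free_thills //=.
- by rewrite andbF.
- by move=> Htu ->; rewrite (psi_nonleaf_r Htu) add1n prednK // (psi_gt0 Htu).
Qed.

Lemma psi_in_A k t u : psi k t u -> ~~ odd (tdescent t) /\ odd_ground_descents t.
Proof.
elim=> {k t u} [R Q F|k Q G t u] /phi_even hQ.
- by rewrite /= tdescent_tcat /= negbK.
- case: t => [|l r] Htu; first by have := psi_nonleaf_l Htu.
  by case=> /= ->.
Qed.

Lemma psi_total_l t : ~~ odd (tdescent t) -> odd_ground_descents t -> 0 < treturns t ->
  exists u, psi (treturns t) t u.
Proof.
elim: t => [|l _ r IH] //= ht [hl hr] _.
case: r IH ht hl hr => [|a b] IH /= ht hl hr.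
- case: (tree_lastP l) ht => [->//|[R [Q ->]]].
  rewrite tdescent_tcat /= negbK => /phi_total_l [F HF].
  by exists (tcat F (Node R Leaf)); constructor.
- have [G HG] := phi_total_l (hl isT).
  have [u Hu] := IH ht hr isT.
  by exists (tcat G (Node Leaf u)); constructor.
Qed.

Lemma hill_decomposition u : ~~ is_leaf u ->
  (thills u = 0 /\ exists F R, hill_free F /\ u = tcat F (Node R Leaf)) \/
  (exists G u', [/\ hill_free G, ~~ is_leaf u', u = tcat G (Node Leaf u') &
                    thills u = (thills u').+1]).
Proof.
elim: u => // l _ r IH _.
case: r IH => [|a b] IH.
- left; split; first by rewrite /= andbF.
  by exists Leaf, l.
- case: l => [|x y].
  + by right; exists Leaf, (Node a b).
  + case: (IH isT) => [[h0 [F [R [hF e]]]]|[G [u' [hG hu' e h]]]].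
    * by left; split=> //; exists (Node (Node x y) F), R; rewrite /= e.
    * by right; exists (Node (Node x y) G), u'; rewrite /= e.
Qed.

Lemma psi_total_r k u : ~~ is_leaf u -> thills u = k.-1 -> 0 < k -> exists t, psi k t u.
Proof.
elim: k u => // k IH u hu hk _.
case: (hill_decomposition hu) => [[h0 [F [R [hF eu]]]]|[G [u' [hG hu' eu h]]]]; subst u.
- case: k {IH} hk => [|k] hk; last by rewrite h0 in hk.
  have [Q HQ] := phi_total_r hF.
  by exists (Node (tcat R (Node Q Leaf)) Leaf); constructor.
- case: k IH hk => [|k] IH; rewrite h //= => -[hk].
  have [t Ht] := IH u' hu' hk isT.
  have [Q HQ] := phi_total_r hG.
  by exists (Node Q t); constructor.
Qed.

Lemma psi_inv k t u : psi k t u ->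
  (exists R Q F, [/\ k = 1, t = Node (tcat R (Node Q Leaf)) Leaf,
                     u = tcat F (Node R Leaf) & phi Q F]) \/
  (exists k' Q G t' u', [/\ k = k'.+1, t = Node Q t', u = tcat G (Node Leaf u'),
                           phi Q G & psi k' t' u']).
Proof.
case=> [R Q F HQ | k' Q G t' u' HQ Ht'u'].
- by left; exists R, Q, F.
- by right; exists k', Q, G, t', u'.
Qed.

Lemma psi_functional k k' t u u' : psi k t u -> psi k' t u' -> u = u'.
Proof.
move=> H; elim: H k' u' => {k t u} [R Q F HQ | k Q G t u HQ Htu IH] k' u'
  /psi_inv [[R' [Q' [F' [_ et -> HQ']]]] | [k2 [Q' [G' [t' [u2 [_ et -> HQ' Ht'u2]]]]]]].
- case: et => /tcat_last_inj [<- eQ]; subst Q'.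
  by rewrite (phi_functional HQ HQ').
- by case: et => _ et; move: (psi_nonleaf_l Ht'u2); rewrite -et.
- by case: et => _ et; move: (psi_nonleaf_l Htu); rewrite et.
- case: et => eQ et; subst Q' t'.
  by rewrite (phi_functional HQ HQ') (IH _ _ Ht'u2).
Qed.

Lemma hill_free_tcat_neq F G R u : hill_free F -> hill_free G -> ~~ is_leaf u ->
  tcat F (Node R Leaf) <> tcat G (Node Leaf u).
Proof.
elim: F G => [|l _ r IH] [|l' r'] //=.
- by case: u => // a b _ _ _ [_ /esym].
- by move=> _ _ _ [_ /esym /tcat_Node_neq_Leaf].
- by case=> hl _ _ _ [el]; rewrite el in hl.
- by case=> _ hr [_ hr'] hu [_ /IH]; apply.
Qed.

Lemma hill_free_tcat_inj G G' u u' : hill_free G -> hill_free G' ->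
  tcat G (Node Leaf u) = tcat G' (Node Leaf u') -> G = G' /\ u = u'.
Proof.
elim: G G' => [|l _ r IH] [|l' r'] //=.
- by move=> _ _ [].
- by move=> _ [hl _] [el]; rewrite -el in hl.
- by case=> hl _ _ [el]; rewrite el in hl.
- by case=> _ hr [_ hr'] [-> /IH [] // -> ->].
Qed.

Lemma psi_injective k k' t t' u : psi k t u -> psi k' t' u -> t = t'.
Proof.
move=> H; elim: H k' t' => {k t u} [R Q F HQ | k Q G t u HQ Htu IH] k' t'
  /psi_inv [[R' [Q' [F' [_ -> eu HQ']]]] | [k2 [Q' [G' [t2 [u2 [_ -> eu HQ' Ht2u2]]]]]]].
- case/tcat_last_inj: eu => eF <-; subst F'.
  by rewrite (phi_injective HQ HQ').
- by case: (hill_free_tcat_neq (phi_hill_free HQ) (phi_hill_free HQ') (psi_nonleaf_r Ht2u2) eu).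
- by case: (hill_free_tcat_neq (phi_hill_free HQ') (phi_hill_free HQ) (psi_nonleaf_r Htu) (esym eu)).
- case/(hill_free_tcat_inj (phi_hill_free HQ) (phi_hill_free HQ')): eu => eG eu; subst G' u2.
  by rewrite (phi_injective HQ HQ') (IH _ _ Ht2u2).
Qed.

Definition above_ground (s : path_t) : Prop := forall i, downs (take i s) <= ups (take i s).

Lemma ups_cat a b : ups (a ++ b) = ups a + ups b. Proof. exact: count_cat. Qed.
Lemma downs_cat a b : downs (a ++ b) = downs a + downs b. Proof. exact: count_cat. Qed.
Lemma ups_cons x s : ups (x :: s) = x + ups s. Proof. by []. Qed.
Lemma downs_cons x s : downs (x :: s) = ~~ x + downs s. Proof. by []. Qed.
Lemma ups_nil : ups [::] = 0. Proof. by []. Qed.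
Lemma downs_nil : downs [::] = 0. Proof. by []. Qed.
Definition updownE := (ups_cat, downs_cat, ups_cons, downs_cons, ups_nil, downs_nil).

Lemma ups_encode t : ups (encode t) = tsize t.
Proof. elim: t => //= l IHl r IHr; rewrite !updownE IHl IHr /=; lia. Qed.

Lemma downs_encode t : downs (encode t) = tsize t.
Proof. elim: t => //= l IHl r IHr; rewrite !updownE IHl IHr /=; lia. Qed.

Lemma above_ground_encode t : above_ground (encode t).
Proof.
elim: t => [|l IHl r IHr] [|i] //=.
rewrite ?updownE take_cat.
case: ifP => hi; first by have := IHl i; lia.
case: (i - size (encode l)) => [|j] /=; rewrite !updownE ups_encode downs_encode; first lia.
have := IHr j; lia.
Qed.

Lemma first_return_size_le s1 s2 x y : above_ground s2 -> ups s1 = downs s1 ->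
  s1 ++ false :: x = s2 ++ false :: y -> size s2 <= size s1.
Proof.
move=> P2 b1 e; rewrite leqNgt; apply/negP => lt12.
have := congr1 (take (size s1).+1) e.
rewrite [LHS]take_cat [RHS]takel_cat // ltnNge leqnSn /= subSnn /= => e2.
have := P2 (size s1).+1; rewrite -e2 take0 !updownE /=; lia.
Qed.

Lemma first_return_uniq s1 s2 x y : above_ground s1 -> above_ground s2 ->
  ups s1 = downs s1 -> ups s2 = downs s2 ->
  s1 ++ false :: x = s2 ++ false :: y -> s1 = s2 /\ x = y.
Proof.
move=> P1 P2 b1 b2 e.
have hs : size s1 = size s2.
  by apply/anti_leq; rewrite (first_return_size_le P2 b1 e) (first_return_size_le P1 b2 (esym e)).
by move/eqP: e; rewrite eqseq_cat // => /andP [/eqP -> /eqP [->]].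
Qed.

Lemma encode_inj : injective encode.
Proof.
elim=> [|l IHl r IHr] [|l' r'] //= [].
case/first_return_uniq; rewrite ?ups_encode ?downs_encode //; try exact: above_ground_encode.
by move=> /IHl -> /IHr ->.
Qed.

Lemma encode_tcat a b : encode (tcat a b) = encode a ++ encode b.
Proof. by elim: a => //= l _ r ->; rewrite -catA. Qed.

(* A path that stays above ground is a Dyck path followed by unmatched upsteps,
   each followed by a Dyck path; the list ts is read from the end of the path. *)
Fixpoint stack_encode (t0 : tree) (ts : seq tree) : path_t :=
  if ts is t :: ts' then stack_encode t0 ts' ++ true :: encode t else encode t0.

Lemma ups_stack_encode t0 ts : ups (stack_encode t0 ts) = downs (stack_encode t0 ts) + size ts.
Proof.
elim: ts => /= [|t ts IH]; first by rewrite ups_encode downs_encode addn0.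
rewrite !updownE IH ups_encode downs_encode /=; lia.
Qed.

Lemma above_ground_rcons p b : above_ground (rcons p b) -> above_ground p.
Proof.
move=> H i; case: (leqP i (size p)) => hi.
- by have := H i; rewrite -cats1 takel_cat.
- by have := H (size p); rewrite -cats1 takel_cat // take_size take_oversize // ltnW.
Qed.

Lemma above_ground_stack_encode p : above_ground p -> exists t0 ts, p = stack_encode t0 ts.
Proof.
elim/last_ind: p => [|p b IH] H; first by exists Leaf, [::].
have [t0 [ts ep]] := IH (above_ground_rcons H).
case: b H => H.
- by exists t0, (Leaf :: ts); rewrite ep /= cats1.
- have := H (size (rcons p false)).
  rewrite take_size -cats1 !updownE /= ep ups_stack_encode => hlt.
  case: ts {ep} hlt => [|tl [|tm ts]] /= hlt; first lia.
  + by exists (tcat t0 (Node tl Leaf)), [::]; rewrite /= encode_tcat /= -catA.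
  + by exists t0, (tcat tm (Node tl Leaf) :: ts); rewrite /= encode_tcat /= -!catA.
Qed.

Lemma dyck_encodeP n p : dyck n p -> exists2 t, p = encode t & tsize t = n.
Proof.
case=> hu hd /above_ground_stack_encode [t0 [ts ep]].
have := ups_stack_encode t0 ts; rewrite -ep hu hd.
case: ts ep => [|? ?] ep /=; last lia.
by exists t0; rewrite // -(ups_encode t0) -hu ep.
Qed.

Lemma dyck_encode t : dyck (tsize t) (encode t).
Proof. by split; [exact: ups_encode | exact: downs_encode | exact: above_ground_encode]. Qed.

Lemma count_iota_add (P : pred nat) m n :
  count P (iota 0 (m + n)) = count P (iota 0 m) + count (fun j => P (m + j)) (iota 0 n).
Proof. by rewrite iotaD count_cat add0n -{2}[m]addn0 iotaDl count_map. Qed.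

Lemma nth_cat_size_add (T : Type) (x : T) (a b : seq T) j : nth x (a ++ b) (size a + j) = nth x b j.
Proof. by rewrite nth_cat ltnNge leq_addr /= addKn. Qed.

Lemma take_cat_size_add (T : Type) (a b : seq T) j : take (size a + j) (a ++ b) = a ++ take j b.
Proof. by rewrite take_cat ltnNge leq_addr /= addKn. Qed.

Lemma is_return_cat_r a b j : ups a = downs a ->
  is_return (a ++ b) (size a + j) = is_return b j.
Proof.
move=> e; rewrite /is_return size_cat ltn_add2l nth_cat_size_add -addnS take_cat_size_add.
by rewrite !updownE e eqn_add2l.
Qed.

Lemma is_early_hill_cat_r a b j : ups a = downs a ->
  is_early_hill (a ++ b) (size a + j) = is_early_hill b j.
Proof.
move=> e; rewrite /is_early_hill size_cat -!addnS leq_add2l !nth_cat_size_add.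
by rewrite take_cat_size_add !updownE e eqn_add2l.
Qed.

Lemma is_return_cat_l a b i : i < size a -> is_return (a ++ b) i = is_return a i.
Proof.
move=> hi; rewrite /is_return size_cat nth_cat hi takel_cat //.
by rewrite (leq_trans hi (leq_addr _ _)).
Qed.

Lemma encode_Node l r : encode (Node l r) = encode (Node l Leaf) ++ encode r.
Proof. by rewrite /= -catA. Qed.

Lemma size_encode_prime l : size (encode (Node l Leaf)) = (size (encode l)).+2.
Proof. by rewrite /= size_cat addn1. Qed.

Lemma encode_prime_above l i : 0 < i < (size (encode l)).+2 ->
  downs (take i (encode (Node l Leaf))) < ups (take i (encode (Node l Leaf))).
Proof.
case: i => // i /andP [_ hi] /=.
rewrite takel_cat; last lia.
have := above_ground_encode l i; rewrite ?updownE /=; lia.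
Qed.

Lemma is_return_encode_prime l i :
  is_return (encode (Node l Leaf)) i = (i == (size (encode l)).+1).
Proof.
case: (ltngtP i (size (encode l)).+1) => h.
- have hi : 0 < i.+1 < (size (encode l)).+2 by lia.
  have := encode_prime_above hi.
  by rewrite /is_return => /gtn_eqF ->; rewrite !andbF.
- by rewrite /is_return size_encode_prime ltnNge h.
- rewrite /is_return take_oversize; last by rewrite size_encode_prime h.
  rewrite ups_encode downs_encode eqxx size_encode_prime h ltnSn /= andbT.
  by rewrite nth_cat ltnn subnn.
Qed.

Lemma nreturns_encode t : nreturns (encode t) = treturns t.
Proof.
elim: t => // l _ r IH.
rewrite encode_Node /nreturns size_cat count_iota_add.
rewrite [X in _ + X](eq_count (a2 := is_return (encode r))); last first.
  by move=> j; rewrite is_return_cat_r // ups_encode downs_encode.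
rewrite -/(nreturns (encode r)) IH.
rewrite (eq_in_count (a2 := pred1 (size (encode l)).+1)); last first.
  by move=> i; rewrite mem_iota => /andP [_ hi]; rewrite is_return_cat_l // is_return_encode_prime.
by rewrite count_uniq_mem ?iota_uniq // mem_iota size_encode_prime add0n leq0n ltnSn.
Qed.

Lemma is_early_hill_prime_cat l b i : 0 < i < (size (encode l)).+2 ->
  is_early_hill (encode (Node l Leaf) ++ b) i = false.
Proof.
move=> hi; rewrite /is_early_hill takel_cat; last by rewrite size_encode_prime; lia.
by rewrite (gtn_eqF (encode_prime_above hi)) !andbF.
Qed.

Lemma nearly_hills_encode t : nearly_hills (encode t) = thills t.
Proof.
elim: t => // l _ r IH.
rewrite encode_Node /nearly_hills size_cat count_iota_add.
rewrite [X in _ + X](eq_count (a2 := is_early_hill (encode r))); last first.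
  by move=> j; rewrite is_early_hill_cat_r // ups_encode downs_encode.
rewrite -/(nearly_hills (encode r)) IH size_encode_prime.
rewrite [iota 0 _]/= [count _ (_ :: _)]/=.
rewrite (eq_in_count (a2 := pred0)); last first.
  by move=> i; rewrite mem_iota => hi; rewrite is_early_hill_prime_cat //; lia.
rewrite count_pred0 addn0 /=; congr (_ + _).
rewrite (@is_early_hill_prime_cat l (encode r) 1 isT) addn0.
by case: l => [|? ?]; case: r {IH} => [|? ?]; rewrite /is_early_hill /= ?andbF.
Qed.

Lemma trailing_downs_cat s1 s2 : trailing_downs (s1 ++ s2) =
  if has id s2 then trailing_downs s2 else size s2 + trailing_downs s1.
Proof. by rewrite /trailing_downs rev_cat find_cat has_rev size_rev. Qed.

Lemma has_encode t : has id (encode t) = ~~ is_leaf t.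
Proof. by case: t. Qed.

Lemma trailing_downs_encode t : trailing_downs (encode t) = tdescent t.
Proof.
elim: t => // l IHl r IHr.
rewrite encode_Node trailing_downs_cat has_encode /=.
case: r IHr => [|? ?] IHr //=.
rewrite -[_ :: _]/(([:: true] ++ encode l) ++ [:: false]).
rewrite (trailing_downs_cat _ [:: false]) (trailing_downs_cat [:: true]) has_encode /=.
by case: l IHl => [|? ?] //= ->.
Qed.

Definition odd_return_descents (p : path_t) : Prop :=
  forall i, is_return p i -> i.+1 < size p -> odd (trailing_downs (take i.+1 p)).

Lemma is_return_has_up b j : is_return b j -> has id (take j.+1 b).
Proof.
case/and3P => hj hn /eqP he.
rewrite has_count -[count id _]/(ups _); move: he.
rewrite (take_nth true hj) -cats1 !updownE.
by case: (nth true b j) hn => //= _; lia.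
Qed.

Lemma odd_return_descents_prime_cat l b :
  odd_return_descents (encode (Node l Leaf) ++ b) <->
  (b != [::] -> odd (trailing_downs (encode (Node l Leaf)))) /\ odd_return_descents b.
Proof.
have bal : ups (encode (Node l Leaf)) = downs (encode (Node l Leaf)).
  by rewrite ups_encode downs_encode.
split.
- move=> H; split.
  + move=> hb; have := H (size (encode l)).+1.
    rewrite is_return_cat_l ?size_encode_prime // is_return_encode_prime eqxx.
    rewrite size_cat size_encode_prime take_size_cat ?size_encode_prime //.
    by apply=> //; rewrite -[X in X < _]addn0 ltn_add2l lt0n size_eq0.
  + move=> j hj hs; have := H (size (encode (Node l Leaf)) + j).
    rewrite is_return_cat_r // size_cat -addnS ltn_add2l take_cat_size_add.
    by rewrite trailing_downs_cat is_return_has_up //; apply.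
- case=> h1 h2 i hi hs.
  case: (ltnP i (size (encode (Node l Leaf)))) => hlt.
  + move: hi; rewrite is_return_cat_l // is_return_encode_prime => /eqP ei; subst i.
    rewrite take_size_cat ?size_encode_prime //; apply: h1.
    by move: hs; rewrite size_cat size_encode_prime; case: b {h2} => //=; rewrite addn0 ltnn.
  + move: hi hs; rewrite -(subnKC hlt) is_return_cat_r // size_cat -addnS ltn_add2l.
    move=> hi hs; rewrite take_cat_size_add trailing_downs_cat is_return_has_up //.
    exact: h2.
Qed.

Lemma odd_return_descents_encode t : odd_return_descents (encode t) <-> odd_ground_descents t.
Proof.
elim: t => [|l _ r IH]; first by split=> // _ i; case/and3P.
rewrite encode_Node odd_return_descents_prime_cat trailing_downs_encode /=.
have -> : (encode r != [::]) = ~~ is_leaf r by case: (r).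
by split; case=> h1 /IH h2.
Qed.

Lemma in_A_encode t :
  in_A (tsize t) (encode t) <-> ~~ odd (tdescent t) /\ odd_ground_descents t.
Proof.
rewrite /in_A /terminal_descent_length trailing_downs_encode -odd_return_descents_encode.
by split=> [[]|[]]; split=> //; exact: dyck_encode.
Qed.

Definition encodes_psi (k : nat) (p q : path_t) : Prop :=
  exists t u, [/\ p = encode t, q = encode u & psi k t u].

Lemma encodes_psi_total_l n k p : 0 < k -> in_A n p -> nreturns p = k ->
  exists2 q, dyck n.-1 q /\ nearly_hills q = k.-1 & encodes_psi k p q.
Proof.
move=> hk hA; case: (hA) => /dyck_encodeP [t ep en] _ _; subst p n.
case/in_A_encode: hA => ht Ct; rewrite nreturns_encode => hr; subst k.
have [u Htu] := psi_total_l ht Ct hk.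
exists (encode u); last by exists t, u.
rewrite nearly_hills_encode (psi_thills Htu) -(psi_tsize Htu).
by split=> //; exact: dyck_encode.
Qed.

Lemma encodes_psi_total_r n k q : 1 < n -> 0 < k -> dyck n.-1 q -> nearly_hills q = k.-1 ->
  exists2 p, in_A n p /\ nreturns p = k & encodes_psi k p q.
Proof.
move=> hn hk /dyck_encodeP [u -> en]; rewrite nearly_hills_encode => hu.
have u_node : ~~ is_leaf u by case: u en {hu} => //= en; lia.
have [t Htu] := psi_total_r u_node hu hk.
exists (encode t); last by exists t, u.
have -> : n = tsize t by rewrite -(psi_tsize Htu) en; lia.
by split; [exact/in_A_encode/(psi_in_A Htu) | rewrite nreturns_encode (psi_treturns Htu)].
Qed.

Lemma encodes_psi_functional k p q q' : encodes_psi k p q -> encodes_psi k p q' -> q = q'.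
Proof.
case=> [t [u [-> -> Htu]]] [t' [u' [/encode_inj <- -> Htu']]].
by rewrite (psi_functional Htu Htu').
Qed.

Lemma encodes_psi_injective k p p' q : encodes_psi k p q -> encodes_psi k p' q -> p = p'.
Proof.
case=> [t [u [-> -> Htu]]] [t' [u' [-> /encode_inj <- Htu']]].
by rewrite (psi_injective Htu Htu').
Qed.

Theorem theorem2 (n k : nat) (hn : 2 <= n) (hk : 1 <= k) :
  exists f : {p : path_t | in_A n p /\ nreturns p = k} ->
             {q : path_t | dyck n.-1 q /\ nearly_hills q = k.-1},
    bijective f.
Proof.
apply: (@rel_sig_bijective _ _ _ _ (encodes_psi k)).
- by move=> p [hA hr]; exact: encodes_psi_total_l hA hr.
- by move=> q [hd hh]; exact: encodes_psi_total_r hd hh.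
- exact: encodes_psi_functional.
- exact: encodes_psi_injective.
Qed.
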